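(* Let $\mathbf{A}\in\mathbb{R}^{m\times n}$ and $\mathbf{c}\in\mathbb{R}^m$ be such that $\|\mathbf{A}^\top\mathbf{c}\|_2^2$ is an integer. If $\mathbf{A}^\top\mathbf{c}\neq\mathbf{0}$, then $$\|\boldsymbol{\Pi}_{\mathbf{A}}\mathbf{c}\|_2^2\ \ge\ \frac{1}{\sigma_{\max}^2(\mathbf{A})}=\frac{1}{\lambda_{\max}(\mathbf{A}^\top\mathbf{A})}.$$
   Context: $\boldsymbol{\Pi}_{\mathbf{A}}=\mathbf{A}(\mathbf{A}^\top\mathbf{A})^{\dagger}\mathbf{A}^\top$ is the orthogonal projection onto the image of $\mathbf{A}$ ($\dagger$ = Moore–Penrose pseudoinverse); $\sigma_{\max}(\mathbf{A})$ is the largest singular value of $\mathbf{A}$ and $\lambda_{\max}$ the largest eigenvalue. *)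

From HB Require Import structures.
From mathcomp Require Import all_boot all_order all_algebra.
From mathcomp Require Import boolp classical_sets reals.
Set Implicit Arguments. Unset Strict Implicit. Unset Printing Implicit Defensive.
Import Order.TTheory GRing.Theory Num.Theory.
Local Open Scope ring_scope.

Definition sqnorm (R : realType) (m : nat) (v : 'cV[R]_m) : R :=
  \sum_(i < m) v i 0 ^+ 2.

Definition is_pinv (R : realType) (p q : nat) (M : 'M[R]_(p, q)) (X : 'M[R]_(q, p)) :=
  [/\ M *m X *m M = M, X *m M *m X = X, (M *m X)^T = M *m X & (X *m M)^T = X *m M].

Definition pinv (R : realType) (p q : nat) (M : 'M[R]_(p, q)) : 'M[R]_(q, p) :=
  xget 0 [set X | is_pinv M X].

(* orthogonal projection onto the image of A : Pi_A = A (A^T A)^+ A^T *)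
Definition proj_im (R : realType) (m n : nat) (A : 'M[R]_(m, n)) : 'M[R]_m :=
  A *m pinv (A^T *m A) *m A^T.

Definition lambda_max (R : realType) (n : nat) (M : 'M[R]_n) : R :=
  xget 0 [set l | eigenvalue M l /\ forall mu, eigenvalue M mu -> mu <= l].

Definition sigma_max (R : realType) (m n : nat) (A : 'M[R]_(m, n)) : R :=
  Num.sqrt (lambda_max (A^T *m A)).

From HB Require Import structures.
From mathcomp Require Import all_boot all_order all_algebra.
From mathcomp Require Import boolp classical_sets reals.
From mathcomp Require Import complex spectral sesquilinear.
Import Order.TTheory GRing.Theory Num.Theory.
Local Open Scope ring_scope.
Set Implicit Arguments. Unset Strict Implicit. Unset Printing Implicit Defensive.

(* Put M := A^T A, b := A^T c and y := M^+ b.  Since b lies in the range of M,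
   M y = b, and Pi_A c = A y, so ||Pi_A c||^2 = y^T M y while ||b||^2 = y^T M^2 y.
   The spectral theorem gives y^T M^2 y <= lambda_max(M) y^T M y, and ||b||^2 is
   a positive integer, hence at least 1. *)

Section HermitianForms.
Variable C : numClosedFieldType.
Local Open Scope sesquilinear_scope.

Lemma hermitian_eigenvalue_real n (N : 'M[C]_n) a :
  N ^t* = N -> eigenvalue N a -> a \is Num.real.
Proof.
move=> hN /eigenvalueP [v vN v_neq0].
have vv_gt0 : 0 < (v *m v ^t*) 0 0 by rewrite -dotmxE dnorm_gt0.
have form_a : (v *m N *m v ^t*) 0 0 = a * (v *m v ^t*) 0 0.
  by rewrite vN -scalemxAl mxE.
have form_conj : ((v *m N *m v ^t*) 0 0)^* = (v *m N *m v ^t*) 0 0.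
  transitivity (((v *m N *m v ^t*) ^t*) 0 0); first by rewrite !mxE.
  by rewrite !trmx_mul !map_mxM trmxCK hN mulmxA.
apply/CrealP; apply: (mulIf (lt0r_neq0 vv_gt0)).
by rewrite -[in RHS]form_a -form_conj form_a rmorphM /= (geC0_conj (ltW vv_gt0)).
Qed.

Lemma diag_mx_form n (e : 'rV[C]_n) (w : 'cV[C]_n) :
  (w ^t* *m diag_mx e *m w) 0 0 = \sum_i e 0 i * (w i 0 * (w i 0)^*).
Proof.
rewrite mxE; apply: eq_bigr => i _.
by rewrite mul_mx_diag !mxE mulrAC mulrC (mulrC (_^*)).
Qed.

Lemma spectral_diag_eigenvalue n (N : 'M[C]_n) i :
  N \is normalmx -> eigenvalue N (spectral_diag N 0 i).
Proof.
move=> /orthomx_spectralP eN; set P := spectralmx N in eN *.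
have PU : P \is unitarymx by exact: spectral_unitarymx.
have /unitarymxP PPt := PU; rewrite invmx_unitary // in eN.
apply/eigenvalueP; exists (row i P).
  by rewrite {1}eN !mulmxA -row_mul PPt row1 -rowE row_diag_mx -scalemxAl -rowE.
apply/negP => /eqP /(congr1 (fun X => X *m P ^t*)).
rewrite mul0mx -row_mul PPt row1 => /rowP /(_ i) /eqP.
by rewrite !mxE !eqxx oner_eq0.
Qed.

Lemma hermitian_sqr_form_le n (N : 'M[C]_n) (lam : C) :
  N ^t* = N -> (forall a, eigenvalue N a -> 0 <= a <= lam) ->
  forall u : 'cV_n, ((N *m u) ^t* *m (N *m u)) 0 0 <= lam * (u ^t* *m N *m u) 0 0.
Proof.
move=> hN hev u.
have Nn : N \is normalmx by apply/normalmxP; rewrite hN.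
have /orthomx_spectralP eN := Nn.
set P := spectralmx N in eN; set d := spectral_diag N in eN.
have /unitarymxP PPt := spectral_unitarymx N.
rewrite invmx_unitary ?spectral_unitarymx // in eN.
pose w := P *m u.
have wt : w ^t* = u ^t* *m P ^t* by rewrite trmx_mul map_mxM.
have eL : (N *m u) ^t* *m (N *m u) = w ^t* *m diag_mx (\row_j (d 0 j * d 0 j)) *m w.
  rewrite trmx_mul map_mxM hN eN -mulmx_diag wt /w !mulmxA.
  by rewrite -(mulmxA _ P (P ^t*)) -/P PPt mulmx1 ?mulmxA.
have eR : u ^t* *m N *m u = w ^t* *m diag_mx d *m w by rewrite eN wt /w ?mulmxA.
rewrite eL eR !diag_mx_form mulr_sumr; apply: ler_sum => i _.
have /andP[d_ge0 d_le] := hev _ (spectral_diag_eigenvalue i Nn).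
rewrite mxE [X in _ <= X]mulrA.
by apply: ler_wpM2r; [exact: mul_conjC_ge0 | exact: ler_wpM2r].
Qed.

End HermitianForms.

Section RealGram.
Variable R : realType.
Local Notation toC := (real_complex R).

Lemma sqnormE m (v : 'cV[R]_m) : sqnorm v = (v^T *m v) 0 0.
Proof. by rewrite /sqnorm mxE; apply: eq_bigr => i _; rewrite !mxE expr2. Qed.

Lemma sqnorm_ge0 m (v : 'cV[R]_m) : 0 <= sqnorm v.
Proof. by apply: sumr_ge0 => i _; exact: sqr_ge0. Qed.

Lemma sqnorm_eq0 m (v : 'cV[R]_m) : (sqnorm v == 0) = (v == 0).
Proof.
apply/idP/eqP => [/eqP /psumr_eq0P v0 | ->]; last first.
  by rewrite /sqnorm big1 // => i _; rewrite mxE expr0n.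
apply/colP => i; rewrite mxE; apply/eqP; rewrite -sqrf_eq0.
by rewrite v0 // => j _; exact: sqr_ge0.
Qed.

Lemma sqnorm_gt0 m (v : 'cV[R]_m) : (0 < sqnorm v) = (v != 0).
Proof. by rewrite lt_def sqnorm_eq0 sqnorm_ge0 andbT. Qed.

Lemma mulmx_trmx_eq0 p k (W : 'M[R]_(p, k)) : (W *m W^T == 0) = (W == 0).
Proof.
apply/eqP/eqP => [WWt0 | ->]; last by rewrite mul0mx.
apply/row_matrixP => i; rewrite row0; apply/eqP.
rewrite -trmx_eq0 -sqnorm_eq0 sqnormE trmxK.
have -> : (row i W *m (row i W)^T) 0 0 = (W *m W^T) i i.
  by rewrite !mxE; apply: eq_bigr => j _; rewrite !mxE.
by rewrite WWt0 mxE.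
Qed.

Lemma gram_unitmx p k (G : 'M[R]_(p, k)) : row_free G -> G *m G^T \in unitmx.
Proof.
move=> fG; rewrite -row_free_unit; apply: inj_row_free => v.
rewrite mulmxA => vGGt0; apply/eqP; rewrite -(mulmx_free_eq0 _ fG) -mulmx_trmx_eq0.
by rewrite trmx_mul mulmxA vGGt0 mul0mx.
Qed.

Lemma eigenvalue_gram_ge0 m n (A : 'M[R]_(m, n)) r :
  eigenvalue (A^T *m A) r -> 0 <= r.
Proof.
move=> /eigenvalueP [v vM v_neq0].
have sqnormAv : sqnorm (A *m v^T) = r * sqnorm v^T.
  by rewrite !sqnormE trmx_mul !trmxK !mulmxA -(mulmxA v) vM -scalemxAl mxE.
have v_gt0 : 0 < sqnorm v^T by rewrite sqnorm_gt0 trmx_eq0.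
by rewrite -(pmulr_lge0 r v_gt0) -sqnormAv sqnorm_ge0.
Qed.

Lemma trmxC_real_complex p q (X : 'M[R]_(p, q)) :
  ((map_mx toC X) ^t* = map_mx toC X^T)%sesqui.
Proof. by apply/matrixP => i j; rewrite !mxE conj_Creal // complex_real. Qed.

Lemma sym_sqnorm_le n (M : 'M[R]_n) (lam : R) :
  M^T = M -> (forall r, eigenvalue M r -> 0 <= r <= lam) ->
  forall y : 'cV_n, sqnorm (M *m y) <= lam * (y^T *m M *m y) 0 0.
Proof.
(* the spectral theorem needs an algebraically closed field: pass to R[i] *)
move=> sM hev y; pose Mc := map_mx toC M.
have hMc : (Mc ^t* = Mc)%sesqui by rewrite trmxC_real_complex sM.
have hevc a : eigenvalue Mc a -> 0 <= a <= toC lam.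
  move=> eva; have /complex_realP [r ar] := hermitian_eigenvalue_real hMc eva.
  move: eva; rewrite ar eigenvalue_map => /hev.
  by rewrite -ler0c -lecR.
have mapE (X : 'M[R]_1) : toC (X 0 0) = map_mx toC X 0 0 by rewrite mxE.
rewrite sqnormE -lecR rmorphM /= !mapE !map_mxM -!trmxC_real_complex !map_mxM.
exact: hermitian_sqr_form_le hMc hevc (map_mx toC y).
Qed.

Lemma gram_sqnorm_le m n (A : 'M[R]_(m, n)) (lam : R) :
  (forall r, eigenvalue (A^T *m A) r -> r <= lam) ->
  forall y : 'cV_n, sqnorm (A^T *m A *m y) <= lam * sqnorm (A *m y).
Proof.
move=> hev y; rewrite [sqnorm (A *m y)]sqnormE trmx_mul !mulmxA -(mulmxA _ A^T).
apply: sym_sqnorm_le => [|r evr]; first by rewrite trmx_mul trmxK.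
by rewrite (eigenvalue_gram_ge0 evr) hev.
Qed.

End RealGram.

Section PseudoInverse.
Variable R : realType.

Lemma is_pinv_full_rank_factorization p q r (F : 'M[R]_(p, r)) (G : 'M[R]_(r, q)) :
  G *m G^T \in unitmx -> F^T *m F \in unitmx ->
  is_pinv (F *m G) (G^T *m invmx (G *m G^T) *m invmx (F^T *m F) *m F^T).
Proof.
move=> uG uF; set X := G^T *m _ *m _ *m F^T.
have FGX : F *m G *m X = F *m invmx (F^T *m F) *m F^T.
  by rewrite /X !mulmxA -(mulmxA F G G^T) -(mulmxA F (G *m G^T)) mulmxV // mulmx1.
have XFG : X *m (F *m G) = G^T *m invmx (G *m G^T) *m G.
  by rewrite /X !mulmxA -(mulmxA _ F^T F) -(mulmxA _ (invmx (F^T *m F))) mulVmx // mulmx1.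
split.
- by rewrite FGX -!mulmxA (mulmxA F^T) mulKmx.
- by rewrite XFG /X -!mulmxA (mulmxA G) mulKmx.
- by rewrite FGX !trmx_mul trmxK trmx_inv trmx_mul trmxK mulmxA.
- by rewrite XFG !trmx_mul trmxK trmx_inv trmx_mul trmxK mulmxA.
Qed.

Lemma is_pinv_exists p q (B : 'M[R]_(p, q)) : exists X, is_pinv B X.
Proof.
rewrite -{1}(mulmx_base B); eexists.
apply: is_pinv_full_rank_factorization; first exact/gram_unitmx/row_base_free.
rewrite -[X in _ *m X]trmxK; apply: gram_unitmx.
by rewrite /row_free mxrank_tr; exact: col_base_full.
Qed.

Lemma pinvP p q (B : 'M[R]_(p, q)) : is_pinv B (pinv B).
Proof. by have [X BX] := is_pinv_exists B; exact: (xgetI 0 BX). Qed.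

Lemma gram_ginv_trmx m n (A : 'M[R]_(m, n)) X :
  A^T *m A *m X *m (A^T *m A) = A^T *m A -> A^T *m A *m X *m A^T = A^T.
Proof.
move=> MXM; set E := 1%:M - A^T *m A *m X.
have EAt0 : E *m A^T = 0.
  apply/eqP; rewrite -mulmx_trmx_eq0 trmx_mul trmxK mulmxA -(mulmxA E).
  by rewrite mulmxBl mul1mx MXM subrr mul0mx.
by move/eqP: EAt0; rewrite mulmxBl mul1mx subr_eq0 => /eqP/esym.
Qed.

End PseudoInverse.

Theorem lemma4p8 (R : realType) (m n : nat) (A : 'M[R]_(m, n)) (c : 'cV[R]_m)
  (hint : exists k : int, sqnorm (A^T *m c) = k%:~R)
  (hnz : A^T *m c != 0) :
  sqnorm (proj_im A *m c) >= 1 / sigma_max A ^+ 2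
  /\ 1 / sigma_max A ^+ 2 = 1 / lambda_max (A^T *m A).
Proof.
rewrite /sigma_max /lambda_max; case: xgetP => [l _ [l_ev l_max] | _]; last first.
  (* no largest eigenvalue: [xget] yields 0 and both bounds are 1 / 0 = 0 *)
  by rewrite sqrtr0 expr0n /= div1r invr0; split => //; exact: sqnorm_ge0.
rewrite sqr_sqrtr ?(eigenvalue_gram_ge0 l_ev) //; split => //.
set b := A^T *m c; set y := pinv (A^T *m A) *m b.
have proj_c : proj_im A *m c = A *m y by rewrite /y /b !mulmxA.
have My : A^T *m A *m y = b.
  by rewrite /y /b !mulmxA gram_ginv_trmx //; case: (pinvP (A^T *m A)).
have b_ge1 : 1 <= sqnorm b.
  by have [k bk] := hint; rewrite bk ler1z -gtz0_ge1 -(ltr0z R) -bk sqnorm_gt0.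
have b_le := gram_sqnorm_le l_max y; rewrite My -proj_c in b_le.
have l_gt0 : 0 < l.
  rewrite lt_def (eigenvalue_gram_ge0 l_ev) andbT; apply: contraTneq b_le => ->.
  by rewrite mul0r -ltNge (lt_le_trans ltr01 b_ge1).
by rewrite div1r -[l^-1]mulr1 ler_pdivrMl // (le_trans b_ge1).
Qed.
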